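(* Let $A$ be a left skew brace and $I$ an ideal of $A$. Then there is a largest ideal of $A$ that centralizes $I$ (the centralizer of $I$); i.e. the set of ideals $J$ of $A$ with $[I,J]=0$ has a greatest element with respect to inclusion.
   Context: A (left) skew brace is a triple $(A,*,\circ)$ with $(A,* )$ and $(A,\circ)$ groups with common identity $1$ such that $a\circ(b*c)=(a\circ b)*a^{-*}*(a\circ c)$ for all $a,b,c\in A$ ($a^{-*}$ the $*$-inverse). Morphisms are maps that are homomorphisms for both operations; products are componentwise. For $a,u\in A$, $\lambda_a(u)=a^{-*}*(a\circ u)$. An ideal of $A$ is a subset $I$ that is a normal subgroup of $(A,\circ)$, satisfies $I*a=a*I$ for all $a\in A$, and $\lambda_a(I)\subseteq I$ for all $a\in A$. An ideal $J$ centralizes $I$, written $[I,J]=0$, if there is a skew brace morphism $\varphi\colon I\times J\to A$ with $\varphi(i,1)=i$ and $\varphi(1,j)=j$ for all $i\in I$, $j\in J$. *)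

Definition is_group {T : Type} (op : T -> T -> T) (e : T) (inv : T -> T) : Prop :=
  (forall x y z, op x (op y z) = op (op x y) z) /\
  (forall x, op e x = x) /\ (forall x, op x e = x) /\
  (forall x, op (inv x) x = e) /\ (forall x, op x (inv x) = e).

Record skew_brace := SkewBrace {
  sb_car :> Type;
  sb_add : sb_car -> sb_car -> sb_car;
  sb_circ : sb_car -> sb_car -> sb_car;
  sb_one : sb_car;
  sb_addinv : sb_car -> sb_car;
  sb_circinv : sb_car -> sb_car;
  sb_add_group : is_group sb_add sb_one sb_addinv;
  sb_circ_group : is_group sb_circ sb_one sb_circinv;
  sb_compat : forall a b c,
    sb_circ a (sb_add b c) =
    sb_add (sb_add (sb_circ a b) (sb_addinv a)) (sb_circ a c)
}.

Arguments sb_add {s}.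
Arguments sb_circ {s}.
Arguments sb_one {s}.
Arguments sb_addinv {s}.
Arguments sb_circinv {s}.

Definition lambda {A : skew_brace} (a u : A) : A := sb_add (sb_addinv a) (sb_circ a u).

Definition subset {A : skew_brace} (I J : A -> Prop) : Prop := forall x, I x -> J x.

Definition circ_normal_subgroup {A : skew_brace} (I : A -> Prop) : Prop :=
  I sb_one /\
  (forall x y, I x -> I y -> I (sb_circ x y)) /\
  (forall x, I x -> I (sb_circinv x)) /\
  (forall a x, I x -> I (sb_circ (sb_circ a x) (sb_circinv a))).

Definition ideal {A : skew_brace} (I : A -> Prop) : Prop :=
  circ_normal_subgroup I /\
  (forall a : A,
     (forall i, I i -> exists i', I i' /\ sb_add i a = sb_add a i') /\
     (forall i, I i -> exists i', I i' /\ sb_add a i = sb_add i' a)) /\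
  (forall (a u : A), I u -> I (lambda a u)).

(* [I, J] = 0: there is a skew brace morphism phi : I x J -> A with
   phi(i,1) = i and phi(1,j) = j.  The skew brace I x J carries the
   componentwise operations; phi is represented as a function of two
   arguments, only its values on I x J matter. *)
Definition centralizes {A : skew_brace} (I J : A -> Prop) : Prop :=
  exists phi : A -> A -> A,
    (forall i i' j j', I i -> I i' -> J j -> J j' ->
       phi (sb_add i i') (sb_add j j') = sb_add (phi i j) (phi i' j')) /\
    (forall i i' j j', I i -> I i' -> J j -> J j' ->
       phi (sb_circ i i') (sb_circ j j') = sb_circ (phi i j) (phi i' j')) /\
    (forall i, I i -> phi i sb_one = i) /\
    (forall j, J j -> phi sb_one j = j).

(* Proof idea: [I, J] = 0 holds exactly when every i in I and j in J satisfy
   i * j = j * i, i o j = j o i and i * j = i o j (the morphism is then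
   (i, j) |-> i * j).  For a fixed j this condition is preserved by o, so the
   o-subgroup generated by all ideals centralizing I still centralizes I.
   That subgroup is an ideal because the union of ideals is closed under
   o-inversion, both conjugations and every lambda_a; it is then the largest
   ideal centralizing I. *)


Section Group.
Context {T : Type} {op : T -> T -> T} {e : T} {inv : T -> T}.
Hypothesis G : is_group op e inv.

Lemma group_assoc x y z : op x (op y z) = op (op x y) z.
Proof. apply G. Qed.
Lemma group_mul1g x : op e x = x.
Proof. apply G. Qed.
Lemma group_mulg1 x : op x e = x.
Proof. apply G. Qed.
Lemma group_mulVg x : op (inv x) x = e.
Proof. apply G. Qed.
Lemma group_mulgV x : op x (inv x) = e.
Proof. apply G. Qed.

Lemma group_mulKg a x : op (inv a) (op a x) = x.
Proof. now rewrite group_assoc, group_mulVg, group_mul1g. Qed.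
Lemma group_mulKVg a x : op a (op (inv a) x) = x.
Proof. now rewrite group_assoc, group_mulgV, group_mul1g. Qed.
Lemma group_mulgK a x : op (op x a) (inv a) = x.
Proof. now rewrite <- group_assoc, group_mulgV, group_mulg1. Qed.
Lemma group_mulgKV a x : op (op x (inv a)) a = x.
Proof. now rewrite <- group_assoc, group_mulVg, group_mulg1. Qed.

Lemma group_mulgI a x y : op a x = op a y -> x = y.
Proof. intro h. now rewrite <- (group_mulKg a x), h, group_mulKg. Qed.
Lemma group_inv_unique a b : op a b = e -> b = inv a.
Proof. intro h. apply (group_mulgI a). now rewrite h, group_mulgV. Qed.
Lemma group_invK a : inv (inv a) = a.
Proof. symmetry. apply group_inv_unique, group_mulVg. Qed.
Lemma group_invM a b : inv (op a b) = op (inv b) (inv a).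
Proof.
  symmetry. apply group_inv_unique.
  now rewrite group_assoc, <- (group_assoc a b), group_mulgV, group_mulg1, group_mulgV.
Qed.
Lemma group_inv1 : inv e = e.
Proof. symmetry. apply group_inv_unique, group_mul1g. Qed.
End Group.

Section SkewBrace.
Variable A : skew_brace.
Local Notation "x ⊕ y" := (@sb_add A x y) (at level 50, left associativity).
Local Notation "x ⊚ y" := (@sb_circ A x y) (at level 40, left associativity).
Local Notation ai := (@sb_addinv A).
Local Notation ci := (@sb_circinv A).
Local Notation one := (@sb_one A).
Local Notation lam := (@lambda A).

Let GA := sb_add_group A.
Let GC := sb_circ_group A.

Lemma circ_lambda a u : a ⊚ u = a ⊕ lam a u.
Proof. unfold lambda. now rewrite (group_mulKVg GA). Qed.

Lemma lambda_add a x y : lam a (x ⊕ y) = lam a x ⊕ lam a y.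
Proof. unfold lambda. now rewrite sb_compat, !(group_assoc GA). Qed.

Lemma lambda_one a : lam a one = one.
Proof. unfold lambda. now rewrite (group_mulg1 GC), (group_mulVg GA). Qed.

Lemma lambda_addinv a x : lam a (ai x) = ai (lam a x).
Proof.
  apply (group_inv_unique GA).
  now rewrite <- lambda_add, (group_mulgV GA), lambda_one.
Qed.

Lemma lambda_circ a b x : lam (a ⊚ b) x = lam a (lam b x).
Proof.
  unfold lambda at 3. rewrite lambda_add, lambda_addinv. unfold lambda.
  rewrite (group_invM GA), (group_invK GA), (group_assoc GC), !(group_assoc GA).
  now rewrite (group_mulgK GA).
Qed.

Lemma lambda1 x : lam one x = x.
Proof. unfold lambda. now rewrite (group_inv1 GA), (group_mul1g GC), (group_mul1g GA). Qed.

Lemma lambda_circinvK a x : lam a (lam (ci a) x) = x.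
Proof. now rewrite <- lambda_circ, (group_mulgV GC), lambda1. Qed.

Lemma add_circ x y : x ⊕ y = x ⊚ lam (ci x) y.
Proof. now rewrite circ_lambda, lambda_circinvK. Qed.

Section IdealProperties.
Variables (J : A -> Prop) (HJ : ideal J).

Lemma ideal_one : J one.
Proof. apply HJ. Qed.
Lemma ideal_circ x y : J x -> J y -> J (x ⊚ y).
Proof. apply HJ. Qed.
Lemma ideal_circinv x : J x -> J (ci x).
Proof. apply HJ. Qed.
Lemma ideal_conj a x : J x -> J (a ⊚ x ⊚ ci a).
Proof. apply HJ. Qed.
Lemma ideal_lambda a x : J x -> J (lam a x).
Proof. apply HJ. Qed.
Lemma ideal_addconj a x : J x -> J (ai a ⊕ (x ⊕ a)).
Proof.
  intro hx. destruct HJ as [_ [Hnormal _]].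
  destruct (proj1 (Hnormal a) x hx) as [x' [hx' ->]].
  now rewrite (group_mulKg GA).
Qed.
End IdealProperties.

Section CircClosure.
Variable S : A -> Prop.

Inductive circ_closure : A -> Prop :=
| circ_closure_one : circ_closure one
| circ_closure_cons s r : S s -> circ_closure r -> circ_closure (s ⊚ r).

Lemma circ_closure_base s : S s -> circ_closure s.
Proof.
  intro hs. rewrite <- (group_mulg1 GC s).
  apply circ_closure_cons; [exact hs | apply circ_closure_one].
Qed.

Lemma circ_closure_circ x y : circ_closure x -> circ_closure y -> circ_closure (x ⊚ y).
Proof.
  intros hx hy. induction hx as [| s r hs _ IH].
  - now rewrite (group_mul1g GC).
  - rewrite <- (group_assoc GC). now apply circ_closure_cons.
Qed.

Hypothesis S_circinv : forall x, S x -> S (ci x).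
Hypothesis S_conj : forall a x, S x -> S (a ⊚ x ⊚ ci a).
Hypothesis S_addconj : forall a x, S x -> S (ai a ⊕ (x ⊕ a)).
Hypothesis S_lambda : forall a x, S x -> S (lam a x).

Lemma circ_closure_circinv x : circ_closure x -> circ_closure (ci x).
Proof.
  induction 1 as [| s r hs _ IH].
  - rewrite (group_inv1 GC). apply circ_closure_one.
  - rewrite (group_invM GC).
    apply circ_closure_circ; [| apply circ_closure_base, S_circinv]; assumption.
Qed.

Lemma circ_closure_conj a x : circ_closure x -> circ_closure (a ⊚ x ⊚ ci a).
Proof.
  induction 1 as [| s r hs _ IH].
  - rewrite (group_mulg1 GC), (group_mulgV GC). apply circ_closure_one.
  - replace (a ⊚ (s ⊚ r) ⊚ ci a) with ((a ⊚ s ⊚ ci a) ⊚ (a ⊚ r ⊚ ci a))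
      by now rewrite !(group_assoc GC), (group_mulgKV GC).
    apply circ_closure_circ; [apply circ_closure_base, S_conj |]; assumption.
Qed.

(* [lam a (s o r) = lam a s o lam b r] for some [b] depending on [a] and [s],
   so the induction hypothesis must hold for every [a]. *)
Lemma circ_closure_lambda x : circ_closure x -> forall a, circ_closure (lam a x).
Proof.
  induction 1 as [| s r hs _ IH]; intro a.
  - rewrite lambda_one. apply circ_closure_one.
  - rewrite circ_lambda, lambda_add, <- lambda_circ, add_circ, <- lambda_circ.
    now apply circ_closure_cons, IH; apply S_lambda.
Qed.

Lemma circ_closure_add x y : circ_closure x -> circ_closure y -> circ_closure (x ⊕ y).
Proof.
  intros hx hy. rewrite add_circ.
  now apply circ_closure_circ, circ_closure_lambda.
Qed.

Lemma circ_closure_addconj_lambda x :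
  circ_closure x -> forall a b, circ_closure (ai a ⊕ (lam b x ⊕ a)).
Proof.
  induction 1 as [| s r hs _ IH]; intros a b.
  - rewrite lambda_one, (group_mul1g GA), (group_mulVg GA). apply circ_closure_one.
  - rewrite circ_lambda, lambda_add, <- lambda_circ.
    replace (ai a ⊕ (lam b s ⊕ lam (b ⊚ s) r ⊕ a))
      with ((ai a ⊕ (lam b s ⊕ a)) ⊕ (ai a ⊕ (lam (b ⊚ s) r ⊕ a)))
      by now rewrite !(group_assoc GA), (group_mulgK GA).
    apply circ_closure_add; [| apply IH].
    now apply circ_closure_base, S_addconj, S_lambda.
Qed.

Lemma circ_closure_addconj a x : circ_closure x -> circ_closure (ai a ⊕ (x ⊕ a)).
Proof.
  intro hx. replace x with (lam one x) by apply lambda1.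
  now apply circ_closure_addconj_lambda.
Qed.

Lemma circ_closure_ideal : ideal circ_closure.
Proof.
  split; [| split].
  - repeat split.
    + apply circ_closure_one.
    + apply circ_closure_circ.
    + apply circ_closure_circinv.
    + apply circ_closure_conj.
  - intro a. split; intros x hx.
    + exists (ai a ⊕ (x ⊕ a)). split.
      * now apply circ_closure_addconj.
      * now rewrite (group_mulKVg GA).
    + exists (ai (ai a) ⊕ (x ⊕ ai a)). split.
      * now apply circ_closure_addconj.
      * now rewrite (group_invK GA), !(group_assoc GA), (group_mulgKV GA).
  - intros a x hx. now apply circ_closure_lambda.
Qed.
End CircClosure.

Definition ideal_join (F : (A -> Prop) -> Prop) : A -> Prop :=
  circ_closure (fun x => exists J, F J /\ ideal J /\ J x).

Lemma ideal_join_ideal F : ideal (ideal_join F).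
Proof.
  apply circ_closure_ideal.
  - intros x [J [hF [hJ hx]]]. exists J. split; [| split]; [.. | apply ideal_circinv]; assumption.
  - intros a x [J [hF [hJ hx]]]. exists J. split; [| split]; [.. | apply ideal_conj]; assumption.
  - intros a x [J [hF [hJ hx]]]. exists J. split; [| split]; [.. | apply ideal_addconj]; assumption.
  - intros a x [J [hF [hJ hx]]]. exists J. split; [| split]; [.. | apply ideal_lambda]; assumption.
Qed.

Lemma ideal_join_ub F J : F J -> ideal J -> subset J (ideal_join F).
Proof. intros hF hJ x hx. apply circ_closure_base. now exists J. Qed.

Section Centralizer.
Variable I : A -> Prop.

Definition centralizes_elt (x : A) : Prop :=
  forall i, I i -> i ⊕ x = x ⊕ i /\ i ⊚ x = x ⊚ i /\ i ⊕ x = i ⊚ x.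

Lemma centralizes_elt_one : centralizes_elt one.
Proof.
  intros i _. now rewrite (group_mulg1 GA), (group_mul1g GA), (group_mulg1 GC), (group_mul1g GC).
Qed.

Lemma centralizes_elt_circ x y :
  centralizes_elt x -> centralizes_elt y -> centralizes_elt (x ⊚ y).
Proof.
  intros hx hy i hi.
  destruct (hx i hi) as [x_add [x_circ x_eq]], (hy i hi) as [y_add [y_circ y_eq]].
  assert (x_i : x ⊚ i = i ⊕ x) by congruence.
  assert (E1 : x ⊚ (i ⊕ y) = i ⊕ (x ⊚ y))
    by now rewrite sb_compat, x_i, (group_mulgK GA).
  assert (E2 : x ⊚ (y ⊕ i) = (x ⊚ y) ⊕ i)
    by now rewrite sb_compat, x_i, x_add, <- (group_assoc GA), (group_mulKg GA).
  split; [| split].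
  - now rewrite <- E1, <- E2, y_add.
  - now rewrite (group_assoc GC), x_circ, <- (group_assoc GC), y_circ, (group_assoc GC).
  - now rewrite (group_assoc GC), x_circ, <- (group_assoc GC), <- y_eq, E1.
Qed.

Lemma centralizes_elt_circ_closure S :
  (forall s, S s -> centralizes_elt s) ->
  forall x, circ_closure S x -> centralizes_elt x.
Proof.
  intros hS x hx. induction hx.
  - apply centralizes_elt_one.
  - now apply centralizes_elt_circ; [apply hS |].
Qed.

Lemma centralizes_elt_of_centralizes J :
  I one -> J one -> centralizes I J -> forall j, J j -> centralizes_elt j.
Proof.
  intros I1 J1 [phi [phi_add [phi_circ [phi_l phi_r]]]] j hj i hi.
  pose proof (phi_add i one one j hi I1 J1 hj) as e1.
  pose proof (phi_add one i j one I1 hi hj J1) as e2.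
  pose proof (phi_circ i one one j hi I1 J1 hj) as e3.
  pose proof (phi_circ one i j one I1 hi hj J1) as e4.
  rewrite (group_mulg1 GA), (group_mul1g GA), phi_l, phi_r in e1, e2 by assumption.
  rewrite (group_mulg1 GC), (group_mul1g GC), phi_l, phi_r in e3, e4 by assumption.
  split; [| split]; congruence.
Qed.

Lemma centralizes_of_elt J :
  (forall x y, I x -> I y -> I (x ⊚ y)) ->
  (forall x y, J x -> J y -> J (x ⊚ y)) ->
  (forall j, J j -> centralizes_elt j) -> centralizes I J.
Proof.
  intros I_circ J_circ hJ. exists (fun i j => i ⊕ j). split; [| split; [| split]].
  - intros i i' j j' hi hi' hj hj'.
    destruct (hJ j hj i' hi') as [comm _].
    now rewrite !(group_assoc GA), <- (group_assoc GA i i' j), comm, (group_assoc GA).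
  - intros i i' j j' hi hi' hj hj'.
    destruct (hJ _ (J_circ j j' hj hj') _ (I_circ i i' hi hi')) as [_ [_ e1]].
    destruct (hJ j hj i hi) as [_ [_ e2]].
    destruct (hJ j hj i' hi') as [_ [e3 _]].
    destruct (hJ j' hj' i' hi') as [_ [_ e4]].
    rewrite e1, e2, e4, !(group_assoc GC), <- (group_assoc GC i i' j), e3.
    now rewrite (group_assoc GC).
  - intros i _. apply (group_mulg1 GA).
  - intros j _. apply (group_mul1g GA).
Qed.

Lemma centralizes_ideal_join : ideal I -> centralizes I (ideal_join (centralizes I)).
Proof.
  intro HI. apply centralizes_of_elt.
  - now apply ideal_circ.
  - apply ideal_circ, ideal_join_ideal.
  - apply centralizes_elt_circ_closure. intros s [J [hc [hJ hs]]].
    exact (centralizes_elt_of_centralizes J (ideal_one I HI) (ideal_one J hJ) hc s hs).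
Qed.
End Centralizer.
End SkewBrace.

Theorem mainTheorem13 (A : skew_brace) (I : A -> Prop) (HI : ideal I) :
  exists C : A -> Prop,
    ideal C /\ centralizes I C /\
    (forall J : A -> Prop, ideal J -> centralizes I J -> subset J C).
Proof.
  exists (ideal_join A (centralizes I)). split; [| split].
  - apply ideal_join_ideal.
  - now apply centralizes_ideal_join.
  - intros J hJ hc. now apply ideal_join_ub.
Qed.
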